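(* Let $0<r_1<r_2<r_3$ satisfy \[ r_2(r_3-r_1)^3 - r_1(r_3+r_2)^3 - r_3(r_1+r_2)^3 \ \ge\ 0 . \] Then the only stationary points (zeros of the gradient) of the smooth function $f:\mathbb T^2\to\mathbb R$, \[ f(\alpha,\beta)=F_{12}(\alpha)+F_{13}(\beta)+F_{23}(\alpha-\beta),\] are $(0,0)$, $(0,\pi)$, $(\pi,0)$ and $(\pi,\pi)$.
   Context: For $i,j\in\{1,2,3\}$ and $\theta\in\mathbb R/2\pi\mathbb Z$ set $D_{ij}(\theta)=r_i^2+r_j^2-2r_ir_j\cos\theta$ and $F_{ij}(\theta)=D_{ij}(\theta)^{-1/2}$ (smooth since $r_i\neq r_j$). *)

From Stdlib Require Import Reals.
From Coquelicot Require Import Coquelicot.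
Open Scope R_scope.

Definition Dij (ri rj theta : R) : R := ri ^ 2 + rj ^ 2 - 2 * ri * rj * cos theta.

Definition Fij (ri rj theta : R) : R := / sqrt (Dij ri rj theta).

(* f(alpha,beta) = F12(alpha) + F13(beta) + F23(alpha - beta),
   viewed as a 2pi-periodic function on R^2 (i.e. a function on the torus). *)
Definition f_pot (r1 r2 r3 alpha beta : R) : R :=
  Fij r1 r2 alpha + Fij r1 r3 beta + Fij r2 r3 (alpha - beta).

Definition stationary (r1 r2 r3 alpha beta : R) : Prop :=
  is_derive (fun a => f_pot r1 r2 r3 a beta) alpha 0 /\
  is_derive (fun b => f_pot r1 r2 r3 alpha b) beta 0.

Definition zero_or_pi_mod2pi (x : R) : Prop :=
  exists k : Z, x = 2 * IZR k * PI \/ x = PI + 2 * IZR k * PI.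

(* Writing D = D_ij(t) and P_ij(t) = D^(3/2), one has F_ij'(t) = -r_i r_j sin t / P_ij(t),
   so the gradient of f vanishes iff, with x = sin alpha, y = sin beta, z = sin(alpha-beta),
     r1 x P23 = - r3 z P12   and   r1 y P23 = r2 z P13.
   If z = 0 both equations force x = y = 0.  If z <> 0 then x <> 0, and the
   "sine triangle inequality" |y| <= |x| + |z| turns the two equations into
     r2 P13 <= r3 P12 + r1 P23.
   Since (r_j - r_i)^3 <= P_ij <= (r_i + r_j)^3, strictly on the right when sin t <> 0,
   this gives r2 (r3-r1)^3 < r3 (r1+r2)^3 + r1 (r2+r3)^3, contradicting the hypothesis. *)

From Stdlib Require Import Reals Lra Psatz.
From Coquelicot Require Import Coquelicot.
Open Scope R_scope.

Definition pow32 (u : R) : R := u * sqrt u.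

Lemma pow32_sqr (c : R) : 0 <= c -> pow32 (c ^ 2) = c ^ 3.
Proof. intros Hc. unfold pow32. rewrite sqrt_pow2 by exact Hc. ring. Qed.

Lemma pow32_pos (u : R) : 0 < u -> 0 < pow32 u.
Proof. intros Hu. unfold pow32. apply Rmult_lt_0_compat; [exact Hu | now apply sqrt_lt_R0]. Qed.

Lemma pow32_le (u v : R) : 0 <= u -> u <= v -> pow32 u <= pow32 v.
Proof.
  intros Hu Huv. unfold pow32.
  apply Rmult_le_compat; [exact Hu | apply sqrt_pos | exact Huv | now apply sqrt_le_1_alt].
Qed.

Lemma pow32_lt (u v : R) : 0 <= u -> u < v -> pow32 u < pow32 v.
Proof.
  intros Hu Huv. unfold pow32.
  apply Rmult_le_0_lt_compat; [exact Hu | apply sqrt_pos | exact Huv | now apply sqrt_lt_1_alt].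
Qed.

Lemma cos_gt_m1 (t : R) : sin t <> 0 -> -1 < cos t.
Proof.
  intros Hs. destruct (COS_bound t) as [Hlo _].
  destruct (Req_dec (cos t) (-1)) as [E | E]; [exfalso | lra].
  apply Hs. pose proof (sin2_cos2 t) as Hsc. rewrite E in Hsc. unfold Rsqr in Hsc. nra.
Qed.

(* |sin beta| <= |sin alpha| + |sin (alpha - beta)|, from beta = alpha - (alpha - beta). *)
Lemma Rabs_sin_sub_le (a b : R) : Rabs (sin b) <= Rabs (sin a) + Rabs (sin (a - b)).
Proof.
  replace b with (a - (a - b)) at 1 by ring. rewrite sin_minus.
  eapply Rle_trans; [apply Rabs_triang |].
  rewrite Rabs_Ropp, !Rabs_mult.
  assert (Rabs (cos (a - b)) <= 1) by (apply Rabs_le; apply COS_bound).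
  assert (Rabs (cos a) <= 1) by (apply Rabs_le; apply COS_bound).
  pose proof (Rabs_pos (sin a)). pose proof (Rabs_pos (sin (a - b))). nra.
Qed.

Lemma zero_or_pi_sin (t : R) : zero_or_pi_mod2pi t <-> sin t = 0.
Proof.
  split.
  - intros [k [E | E]]; apply sin_eq_0_1.
    + exists (2 * k)%Z. rewrite E, mult_IZR. simpl. ring.
    + exists (2 * k + 1)%Z. rewrite E, plus_IZR, mult_IZR. simpl. ring.
  - intros H. destruct (sin_eq_0_0 t H) as [k Hk].
    destruct (Z.Even_or_Odd k) as [[m Hm] | [m Hm]]; exists m; subst k.
    + left. rewrite Hk, mult_IZR. simpl. ring.
    + right. rewrite Hk, plus_IZR, mult_IZR. simpl. ring.
Qed.

Definition Pij (ri rj t : R) : R := pow32 (Dij ri rj t).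

Definition dFij (ri rj t : R) : R := - (ri * rj * sin t) / Pij ri rj t.

Section OnePair.

Variables ri rj : R.
Hypothesis ri_pos : 0 < ri.
Hypothesis ri_lt_rj : ri < rj.

Lemma Dij_ge (t : R) : (rj - ri) ^ 2 <= Dij ri rj t.
Proof.
  unfold Dij. destruct (COS_bound t).
  assert (0 <= ri * rj * (1 - cos t)) by (apply Rmult_le_pos; nra). nra.
Qed.

Lemma Dij_pos (t : R) : 0 < Dij ri rj t.
Proof. pose proof (Dij_ge t). nra. Qed.

Lemma Dij_le (t : R) : Dij ri rj t <= (ri + rj) ^ 2.
Proof.
  unfold Dij. destruct (COS_bound t).
  assert (0 <= ri * rj * (1 + cos t)) by (apply Rmult_le_pos; nra). nra.
Qed.

Lemma Dij_lt (t : R) : sin t <> 0 -> Dij ri rj t < (ri + rj) ^ 2.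
Proof.
  intros Hs. unfold Dij. pose proof (cos_gt_m1 t Hs).
  assert (0 < ri * rj * (1 + cos t)) by (apply Rmult_lt_0_compat; nra). nra.
Qed.

Lemma Pij_pos (t : R) : 0 < Pij ri rj t.
Proof. apply pow32_pos, Dij_pos. Qed.

Lemma Pij_ge (t : R) : (rj - ri) ^ 3 <= Pij ri rj t.
Proof. rewrite <- pow32_sqr by lra. apply pow32_le; [nra | apply Dij_ge]. Qed.

Lemma Pij_le (t : R) : Pij ri rj t <= (ri + rj) ^ 3.
Proof. rewrite <- pow32_sqr by lra. apply pow32_le; [apply Rlt_le, Dij_pos | apply Dij_le]. Qed.

Lemma Pij_lt (t : R) : sin t <> 0 -> Pij ri rj t < (ri + rj) ^ 3.
Proof.
  intros Hs. rewrite <- pow32_sqr by lra.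
  apply pow32_lt; [apply Rlt_le, Dij_pos | now apply Dij_lt].
Qed.

Lemma Fij_derive (t : R) : is_derive (Fij ri rj) t (dFij ri rj t).
Proof.
  pose proof (Dij_pos t) as HD. pose proof (sqrt_lt_R0 _ HD) as HS.
  unfold Fij, dFij, Pij, pow32. unfold Dij in *.
  auto_derive; replace (ri * (ri * 1) + rj * (rj * 1) + - (2 * ri * rj * cos t))
    with (ri ^ 2 + rj ^ 2 - 2 * ri * rj * cos t) by ring.
  - repeat split; lra.
  - set (D := ri ^ 2 + rj ^ 2 - 2 * ri * rj * cos t) in *.
    replace (D * sqrt D) with (sqrt D * sqrt D * sqrt D) by (rewrite sqrt_sqrt; lra).
    field. lra.
Qed.

End OnePair.

(* Derivative rules for the two shapes in which f depends on one of its variables. *)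
Lemma is_derive_shift_sum (g h : R -> R) (c d a l1 l2 : R) :
  is_derive g a l1 -> is_derive h (a - d) l2 ->
  is_derive (fun x => g x + c + h (x - d)) a (l1 + l2).
Proof.
  intros Hg Hh. auto_derive.
  - split; [exists l1 | split; [exists l2 |]]; easy.
  - replace (Derive (fun x => g x) a) with l1 by (symmetry; now apply is_derive_unique).
    replace (Derive (fun x => h x) (a + - d)) with l2 by (symmetry; now apply is_derive_unique).
    ring.
Qed.

Lemma is_derive_reflect_sum (g h : R -> R) (c d b l1 l2 : R) :
  is_derive g b l1 -> is_derive h (d - b) l2 ->
  is_derive (fun y => c + g y + h (d - y)) b (l1 - l2).
Proof.
  intros Hg Hh. auto_derive.
  - split; [exists l1 | split; [exists l2 |]]; easy.
  - replace (Derive (fun y => g y) b) with l1 by (symmetry; now apply is_derive_unique).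
    replace (Derive (fun y => h y) (d + - b)) with l2 by (symmetry; now apply is_derive_unique).
    ring.
Qed.

Lemma is_derive_iff_value (f : R -> R) (x l m : R) :
  is_derive f x l -> (is_derive f x m <-> m = l).
Proof.
  intros Hl. split; intros Hm.
  - rewrite <- (is_derive_unique f x m Hm). now apply is_derive_unique.
  - now subst.
Qed.

Lemma zero_eq_scaled_quotient (k X q : R) : k <> 0 -> q <> 0 -> (0 = - k * X / q <-> X = 0).
Proof.
  intros Hk Hq. split; intros H.
  - replace X with ((- k * X / q) * (- q / k)) by (field; auto). rewrite <- H. ring.
  - rewrite H. field. exact Hq.
Qed.

Lemma balance_triangle (r1 r2 r3 P12 P13 P23 x y z : R) :
  0 < r1 -> 0 < r2 -> 0 < r3 -> 0 < P12 -> 0 < P13 -> 0 < P23 ->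
  r1 * x * P23 + r3 * z * P12 = 0 ->
  r1 * y * P23 - r2 * z * P13 = 0 ->
  Rabs y <= Rabs x + Rabs z -> z <> 0 ->
  r2 * P13 <= r3 * P12 + r1 * P23.
Proof.
  intros Hr1 Hr2 Hr3 HP12 HP13 HP23 Ex Ey Htri Hz.
  assert (Ax : Rabs x * (r1 * P23) = Rabs z * (r3 * P12)).
  { rewrite <- (Rabs_pos_eq (r1 * P23)), <- (Rabs_pos_eq (r3 * P12)) by nra.
    rewrite <- !Rabs_mult, <- Rabs_Ropp. f_equal. lra. }
  assert (Ay : Rabs y * (r1 * P23) = Rabs z * (r2 * P13)).
  { rewrite <- (Rabs_pos_eq (r1 * P23)), <- (Rabs_pos_eq (r2 * P13)) by nra.
    rewrite <- !Rabs_mult. f_equal. lra. }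
  assert (Hz_pos : 0 < Rabs z) by now apply Rabs_pos_lt.
  apply (Rmult_le_reg_l (Rabs z) _ _ Hz_pos).
  rewrite <- Ay.
  apply Rle_trans with ((Rabs x + Rabs z) * (r1 * P23)).
  - apply Rmult_le_compat_r; [nra | exact Htri].
  - rewrite Rmult_plus_distr_r, Ax. lra.
Qed.

Section Gradient.

Variables r1 r2 r3 : R.
Hypothesis r1_pos : 0 < r1.
Hypothesis r1_lt_r2 : r1 < r2.
Hypothesis r2_lt_r3 : r2 < r3.

Lemma partial_alpha (a b : R) :
  is_derive (fun x => f_pot r1 r2 r3 x b) a (dFij r1 r2 a + dFij r2 r3 (a - b)).
Proof. apply is_derive_shift_sum; apply Fij_derive; lra. Qed.

Lemma partial_beta (a b : R) :
  is_derive (fun y => f_pot r1 r2 r3 a y) b (dFij r1 r3 b - dFij r2 r3 (a - b)).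
Proof. apply is_derive_reflect_sum; apply Fij_derive; lra. Qed.

Lemma stationary_iff (a b : R) :
  stationary r1 r2 r3 a b <->
  r1 * sin a * Pij r2 r3 (a - b) + r3 * sin (a - b) * Pij r1 r2 a = 0 /\
  r1 * sin b * Pij r2 r3 (a - b) - r2 * sin (a - b) * Pij r1 r3 b = 0.
Proof.
  pose proof (Pij_pos r1 r2 ltac:(lra) ltac:(lra) a) as P12.
  pose proof (Pij_pos r1 r3 ltac:(lra) ltac:(lra) b) as P13.
  pose proof (Pij_pos r2 r3 ltac:(lra) ltac:(lra) (a - b)) as P23.
  assert (Ealpha : dFij r1 r2 a + dFij r2 r3 (a - b) =
    - r2 * (r1 * sin a * Pij r2 r3 (a - b) + r3 * sin (a - b) * Pij r1 r2 a)
    / (Pij r1 r2 a * Pij r2 r3 (a - b))) by (unfold dFij; field; lra).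
  assert (Ebeta : dFij r1 r3 b - dFij r2 r3 (a - b) =
    - r3 * (r1 * sin b * Pij r2 r3 (a - b) - r2 * sin (a - b) * Pij r1 r3 b)
    / (Pij r1 r3 b * Pij r2 r3 (a - b))) by (unfold dFij; field; lra).
  unfold stationary.
  rewrite (is_derive_iff_value _ _ _ _ (partial_alpha a b)),
    (is_derive_iff_value _ _ _ _ (partial_beta a b)), Ealpha, Ebeta.
  rewrite !zero_eq_scaled_quotient by nra. reflexivity.
Qed.

Lemma sin_stationary (a b : R) : sin a = 0 -> sin b = 0 -> stationary r1 r2 r3 a b.
Proof.
  intros Ha Hb. assert (Hz : sin (a - b) = 0) by (rewrite sin_minus, Ha, Hb; ring).
  apply stationary_iff. rewrite Ha, Hb, Hz. split; ring.
Qed.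

Hypothesis cubic_condition :
  r2 * (r3 - r1) ^ 3 - r1 * (r3 + r2) ^ 3 - r3 * (r1 + r2) ^ 3 >= 0.

Lemma stationary_sin_diff (a b : R) : stationary r1 r2 r3 a b -> sin (a - b) = 0.
Proof.
  intros Hst. apply stationary_iff in Hst as [Ea Eb].
  pose proof (Pij_pos r1 r2 ltac:(lra) ltac:(lra) a) as P12.
  pose proof (Pij_pos r1 r3 ltac:(lra) ltac:(lra) b) as P13.
  pose proof (Pij_pos r2 r3 ltac:(lra) ltac:(lra) (a - b)) as P23.
  destruct (Req_dec (sin (a - b)) 0) as [Hz | Hz]; [exact Hz | exfalso].
  assert (Hx : sin a <> 0).
  { intros Hx. rewrite Hx in Ea. apply Hz.
    apply (Rmult_eq_reg_l (r3 * Pij r1 r2 a)); [lra | apply Rgt_not_eq; nra]. }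
  pose proof (balance_triangle r1 r2 r3 _ _ _ _ _ _ ltac:(lra) ltac:(lra) ltac:(lra)
    P12 P13 P23 Ea Eb (Rabs_sin_sub_le a b) Hz) as Htri.
  pose proof (Pij_lt r1 r2 ltac:(lra) ltac:(lra) a Hx).
  pose proof (Pij_ge r1 r3 ltac:(lra) ltac:(lra) b).
  pose proof (Pij_le r2 r3 ltac:(lra) ltac:(lra) (a - b)).
  nra.
Qed.

Lemma stationary_sin (a b : R) : stationary r1 r2 r3 a b -> sin a = 0 /\ sin b = 0.
Proof.
  intros Hst. pose proof (stationary_sin_diff a b Hst) as Hz.
  apply stationary_iff in Hst as [Ea Eb]. rewrite Hz in Ea, Eb.
  pose proof (Pij_pos r2 r3 ltac:(lra) ltac:(lra) (a - b)) as P23.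
  assert (Hnz : r1 * Pij r2 r3 (a - b) <> 0) by (apply Rgt_not_eq; nra).
  split; apply (Rmult_eq_reg_l (r1 * Pij r2 r3 (a - b))); auto; lra.
Qed.

End Gradient.

Theorem proposition2p2 (r1 r2 r3 : R) :
  0 < r1 -> r1 < r2 -> r2 < r3 ->
  r2 * (r3 - r1) ^ 3 - r1 * (r3 + r2) ^ 3 - r3 * (r1 + r2) ^ 3 >= 0 ->
  forall alpha beta : R,
    stationary r1 r2 r3 alpha beta <->
    (zero_or_pi_mod2pi alpha /\ zero_or_pi_mod2pi beta).
Proof.
  intros H1 H12 H23 Hcubic alpha beta.
  rewrite !zero_or_pi_sin. split.
  - now apply stationary_sin.
  - intros [Ha Hb]. now apply sin_stationary.
Qed.
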